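(* Qualitative invariability may fail for multifold edges under monotonic semantics: there exist a gradual semantics $\sigma$ satisfying monotonicity on all acyclic QBAFs, an acyclic QBAF $\mathcal{Q}=\langle\mathcal{A},\mathcal{R}^-,\mathcal{R}^+,\tau\rangle$, an argument $\alpha\in\mathcal{A}$ and an edge $r=(\beta,\gamma)\in\mathcal{R}$ multifold w.r.t. $\alpha$, such that either $\phi^\alpha_\sigma(r)>0$ and $\phi_\delta<0$ for some $\delta\in[0,1]$, or $\phi^\alpha_\sigma(r)<0$ and $\phi_\delta>0$ for some $\delta\in[0,1]$; here $\phi_\delta$ denotes $\phi^\alpha_\sigma(r)$ computed in $\langle\mathcal{A},\mathcal{R}^-,\mathcal{R}^+,\tau_\delta\rangle$ with $\tau_\delta(\beta)=\delta$ and $\tau_\delta=\tau$ on $\mathcal{A}\setminus\{\beta\}$.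
   Context: A QBAF is a quadruple $\mathcal{Q}=\langle\mathcal{A},\mathcal{R}^-,\mathcal{R}^+,\tau\rangle$ with $\mathcal{A}$ a finite set of arguments, $\mathcal{R}^-,\mathcal{R}^+\subseteq\mathcal{A}\times\mathcal{A}$ disjoint attack and support relations, and $\tau:\mathcal{A}\to[0,1]$ base scores; $\mathcal{R}=\mathcal{R}^-\cup\mathcal{R}^+$, $\mathcal{R}(\beta)=\{(\beta,\gamma)\in\mathcal{R}\}$; acyclic means $(\mathcal{A},\mathcal{R})$ has no directed cycle. A gradual semantics $\sigma$ assigns strengths in $[0,1]$ to arguments of QBAFs. For $\mathcal{S}\subseteq\mathcal{R}$, $\sigma_{\mathcal{S}}(\alpha)$ is the strength of $\alpha$ in $\langle\mathcal{A},\mathcal{R}^-\cap\mathcal{S},\mathcal{R}^+\cap\mathcal{S},\tau\rangle$; for $\tau':\mathcal{A}\to[0,1]$, $\sigma_{\tau'}(\alpha)$ is the strength of $\alpha$ in $\langle\mathcal{A},\mathcal{R}^-,\mathcal{R}^+,\tau'\rangle$. The RAE is $\phi^\alpha_\sigma(r)=\sum_{\mathcal{S}\subseteq\mathcal{R}\setminus\{r\}}\frac{(|\mathcal{R}|-|\mathcal{S}|-1)!|\mathcal{S}|!}{|\mathcal{R}|!}[\sigma_{\mathcal{S}\cup\{r\}}(\alpha)-\sigma_{\mathcal{S}}(\alpha)]$. $\sigma$ satisfies monotonicity on a class of QBAFs if for every QBAF in the class, every $\alpha,\beta\in\mathcal{A}$ with $\alpha\neq\beta$ and $\mathcal{R}(\beta)=\{(\beta,\alpha)\}$,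 and every $\tau':\mathcal{A}\to[0,1]$: (1) if $(\beta,\alpha)\in\mathcal{R}^-$ then $\sigma(\alpha)\le\sigma_{\mathcal{R}\setminus\{(\beta,\alpha)\}}(\alpha)$; (2) if $(\beta,\alpha)\in\mathcal{R}^+$ then $\sigma(\alpha)\ge\sigma_{\mathcal{R}\setminus\{(\beta,\alpha)\}}(\alpha)$; (3) if $(\beta,\alpha)\in\mathcal{R}^-$, $\tau(\beta)\le\tau'(\beta)$ and $\tau'=\tau$ on $\mathcal{A}\setminus\{\beta\}$, then $\sigma(\alpha)\ge\sigma_{\tau'}(\alpha)$; (4) if $(\beta,\alpha)\in\mathcal{R}^+$, $\tau(\beta)\le\tau'(\beta)$ and $\tau'=\tau$ on $\mathcal{A}\setminus\{\beta\}$, then $\sigma(\alpha)\le\sigma_{\tau'}(\alpha)$. A path from $\gamma$ to $\alpha$ is a finite sequence of edges $(x_0,x_1),\dots,(x_{k-1},x_k)\in\mathcal{R}$ with $x_0=\gamma$, $x_k=\alpha$. An edge $(\beta,\gamma)\in\mathcal{R}$ with $\beta\neq\alpha$ is multifold w.r.t. $\alpha$ if $\gamma\neq\alpha$ and there is more than one path from $\gamma$ to $\alpha$ in $\mathcal{Q}$. *)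

From HB Require Import structures.
From mathcomp Require Import all_boot all_order all_algebra.
From mathcomp Require Import reals.
Set Implicit Arguments. Unset Strict Implicit. Unset Printing Implicit Defensive.
Import Order.TTheory GRing.Theory Num.Theory.
Local Open Scope ring_scope.

(* A QBAF <A, Rm, Rp, tau> is represented by a finite type A of arguments,
   attack relation Rm, support relation Rp (sets of pairs) and base scores tau. *)

Definition qbaf_valid (R : realType) (A : finType) (Rm Rp : {set A * A})
    (tau : A -> R) : Prop :=
  Rm :&: Rp = set0 /\ (forall a, 0 <= tau a <= 1).

Definition edge_rel (A : finType) (Rm Rp : {set A * A}) : rel A :=
  fun x y => (x, y) \in Rm :|: Rp.

Definition acyclic (A : finType) (Rm Rp : {set A * A}) : Prop :=
  forall x y, edge_rel Rm Rp x y -> ~~ connect (edge_rel Rm Rp) y x.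

Definition semantics (R : realType) :=
  forall (A : finType), {set A * A} -> {set A * A} -> (A -> R) -> A -> R.

Definition sem_range (R : realType) (sigma : semantics R) : Prop :=
  forall (A : finType) Rm Rp (tau : A -> R) a,
    qbaf_valid Rm Rp tau -> 0 <= sigma A Rm Rp tau a <= 1.

Definition sigma_S (R : realType) (sigma : semantics R) (A : finType)
    (Rm Rp : {set A * A}) (tau : A -> R) (S : {set A * A}) (a : A) : R :=
  sigma A (Rm :&: S) (Rp :&: S) tau a.

Definition out_edges_single (A : finType) (Rm Rp : {set A * A}) (b a : A) :=
  [set e in Rm :|: Rp | e.1 == b] = [set (b, a)].

Definition monotonic_acyclic (R : realType) (sigma : semantics R) : Prop :=
  forall (A : finType) (Rm Rp : {set A * A}) (tau : A -> R),
    qbaf_valid Rm Rp tau -> acyclic Rm Rp ->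
    forall (a b : A), a != b -> out_edges_single Rm Rp b a ->
    forall tau' : A -> R, (forall x, 0 <= tau' x <= 1) ->
      let Rall := Rm :|: Rp in
      ((b, a) \in Rm ->
         sigma A Rm Rp tau a <= sigma_S sigma Rm Rp tau (Rall :\ (b, a)) a) /\
      ((b, a) \in Rp ->
         sigma A Rm Rp tau a >= sigma_S sigma Rm Rp tau (Rall :\ (b, a)) a) /\
      ((b, a) \in Rm -> tau b <= tau' b -> (forall x, x != b -> tau' x = tau x) ->
         sigma A Rm Rp tau a >= sigma A Rm Rp tau' a) /\
      ((b, a) \in Rp -> tau b <= tau' b -> (forall x, x != b -> tau' x = tau x) ->
         sigma A Rm Rp tau a <= sigma A Rm Rp tau' a).

Definition RAE (R : realType) (sigma : semantics R) (A : finType)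
    (Rm Rp : {set A * A}) (tau : A -> R) (a : A) (r : A * A) : R :=
  let Rall := Rm :|: Rp in
  \sum_(S : {set A * A} | S \subset Rall :\ r)
     (((#|Rall| - #|S| - 1)`! * #|S|`!)%:R / (#|Rall|`!)%:R) *
     (sigma_S sigma Rm Rp tau (r |: S) a - sigma_S sigma Rm Rp tau S a).

(* p is (the node sequence of) a path from g to a: the edges are
   (g, p_1), (p_1, p_2), ..., (p_{k-1}, p_k) with p_k = a.  Edge sequences
   and such node sequences are in bijection. *)
Definition is_path_to (A : finType) (Rm Rp : {set A * A}) (g a : A) (p : seq A) :=
  path (edge_rel Rm Rp) g p && (last g p == a).

Definition multifold (A : finType) (Rm Rp : {set A * A}) (a : A) (r : A * A) :=
  [/\ r \in Rm :|: Rp, r.1 != a, r.2 != a &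
      exists p1 p2, [/\ p1 != p2, is_path_to Rm Rp r.2 a p1 &
                        is_path_to Rm Rp r.2 a p2]].

Definition tau_upd (R : realType) (A : finType) (tau : A -> R) (b : A) (d : R) : A -> R :=
  fun x => if x == b then d else tau x.

(* Take σ(α) = τ(α)/2 + 1/4 + s/4 with s = [some β has τ(β) > 1/2] - [some β has
   τ(β) < 1/2], where β ranges over sources of edges (β, γ) into a "fork" γ, i.e. an
   argument with an edge to α and an edge to some other argument.  Monotonicity only
   concerns an argument β whose unique outgoing edge is (β, α); in an acyclic QBAF such
   a β is neither a fork nor the source of an edge into one, so deleting (β, α) or
   changing τ(β) leaves σ(α) unchanged.
   In the QBAF with supports 0 → 1, 1 → 2, 1 → 3, 2 → 3 and α = 3, the multifold edge
   (0, 1) is the only possible edge into a fork; adding it to a subgraph changes σ(3) by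
   sign(τ(0) - 1/2)/4 when the subgraph contains (1, 2) and (1, 3), and not at all
   otherwise.  So its RAE is a positive multiple of sign(τ(0) - 1/2), which flips as
   τ(0) goes from 1 to 0. *)

From HB Require Import structures.
From mathcomp Require Import all_boot all_order all_algebra.
From mathcomp Require Import reals lra.
Import Order.TTheory GRing.Theory Num.Theory.
Set Implicit Arguments. Unset Strict Implicit. Unset Printing Implicit Defensive.
Local Open Scope ring_scope.

Lemma acyclic_no_loop (A : finType) (Rm Rp : {set A * A}) a :
  acyclic Rm Rp -> (a, a) \notin Rm :|: Rp.
Proof. by move=> acyc; apply/negP => Eaa; have := acyc a a Eaa; rewrite connect0. Qed.

Lemma acyclic_of_rank (A : finType) (Rm Rp : {set A * A}) (rk : A -> nat) :
  (forall x y, edge_rel Rm Rp x y -> rk x < rk y)%N -> acyclic Rm Rp.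
Proof.
move=> rk_lt x y Exy; apply/negP => /connectP [p p_path x_last].
have rk_last z q : path (edge_rel Rm Rp) z q -> (rk z <= rk (last z q))%N.
  elim: q z => [|z' q IHq] z //= /andP [Ezz' /IHq]; exact/leq_trans/ltnW/rk_lt.
by have := rk_last _ _ p_path; rewrite -x_last leqNgt rk_lt.
Qed.

Section ShapleyWeights.
Variable R : realType.

Definition shapley_weight (n s : nat) : R := ((n - s - 1)`! * s`!)%:R / (n`!)%:R.

Lemma shapley_weight_gt0 n s : 0 < shapley_weight n s.
Proof. by apply: divr_gt0; rewrite ltr0n ?muln_gt0 !fact_gt0. Qed.

Definition shapley_mass (A : finType) (E : {set A * A}) (r : A * A)
    (P : pred {set A * A}) : R :=
  \sum_(S : {set A * A} | S \subset E :\ r) shapley_weight #|E| #|S| * (P S)%:R.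

Lemma shapley_mass_gt0 (A : finType) (E : {set A * A}) r (P : pred {set A * A}) :
  P (E :\ r) -> 0 < shapley_mass E r P.
Proof.
move=> P_full; rewrite /shapley_mass (bigD1 (E :\ r)) //= P_full mulr1.
rewrite ltr_wpDr ?shapley_weight_gt0 // sumr_ge0 // => S _.
by rewrite mulr_ge0 ?ler0n ?ltW ?shapley_weight_gt0.
Qed.

Lemma RAE_of_indicator_marginals (sigma : semantics R) (A : finType)
    (Rm Rp : {set A * A}) (tau : A -> R) (a : A) (r : A * A) (c : R)
    (P : pred {set A * A}) :
  (forall S : {set A * A}, S \subset (Rm :|: Rp) :\ r ->
     sigma_S sigma Rm Rp tau (r |: S) a - sigma_S sigma Rm Rp tau S a = c * (P S)%:R) ->
  RAE sigma Rm Rp tau a r = c * shapley_mass (Rm :|: Rp) r P.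
Proof.
move=> marginal; rewrite /RAE /shapley_mass mulr_sumr; apply: eq_bigr => S sub_S.
by rewrite marginal // mulrCA.
Qed.

End ShapleyWeights.

Definition fork_edge (A : finType) (E : {set A * A}) (a b g : A) : bool :=
  [&& (b, g) \in E, (g, a) \in E & [exists x, ((g, x) \in E) && (x != a)]].

Section ForkSemantics.
Variable R : realType.

Definition sign_half (x : R) : R := ((2^-1 < x)%R : bool)%:R - ((x < 2^-1)%R : bool)%:R.

Definition fork_sign (A : finType) (E : {set A * A}) (tau : A -> R) (a : A) : R :=
  ([exists b, exists g, fork_edge E a b g && (2^-1 < tau b)%R] : bool)%:R -
  ([exists b, exists g, fork_edge E a b g && (tau b < 2^-1)%R] : bool)%:R.

Definition fork_sem : semantics R :=
  fun A Rm Rp tau a => tau a / 2 + 4^-1 + fork_sign (Rm :|: Rp) tau a / 4.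

Lemma fork_sign_bounds (A : finType) (E : {set A * A}) tau a :
  -1 <= fork_sign E tau a <= 1.
Proof.
by rewrite /fork_sign; do 2!case: [exists b, _]; rewrite /=; apply/andP; split; lra.
Qed.

Lemma fork_sem_range : sem_range fork_sem.
Proof.
move=> A Rm Rp tau a [_ /(_ a) /andP [tau_ge0 tau_le1]].
have /andP [s_ge s_le] := fork_sign_bounds (Rm :|: Rp) tau a.
by rewrite /fork_sem; apply/andP; split; lra.
Qed.

Lemma sign_half1 : sign_half 1 = 1.
Proof.
have half_lt1 : (2^-1 : R) < 1 by lra.
by rewrite /sign_half half_lt1 lt_gtF //= subr0.
Qed.

Lemma sign_half0 : sign_half 0 = -1.
Proof.
have half_gt0 : (0 : R) < 2^-1 by lra.
by rewrite /sign_half half_gt0 lt_gtF //= sub0r.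
Qed.

Lemma eq_fork_sign_edges (A : finType) (E E' : {set A * A}) (tau : A -> R) a :
  fork_edge E' a =2 fork_edge E a -> fork_sign E' tau a = fork_sign E tau a.
Proof.
move=> eqE; rewrite /fork_sign.
by congr ((_ : bool)%:R - (_ : bool)%:R); apply: eq_existsb => b; apply: eq_existsb => g;
  rewrite eqE.
Qed.

Lemma eq_fork_sign_scores (A : finType) (E : {set A * A}) (tau tau' : A -> R) a :
  (forall b g, fork_edge E a b g -> tau' b = tau b) ->
  fork_sign E tau' a = fork_sign E tau a.
Proof.
move=> eq_tau; rewrite /fork_sign.
congr ((_ : bool)%:R - (_ : bool)%:R); apply: eq_existsb => b; apply: eq_existsb => g;
  by case fork_bg: (fork_edge E a b g); rewrite //= (eq_tau b g fork_bg).
Qed.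

End ForkSemantics.

Section SingleOutEdge.
Variables (A : finType) (E : {set A * A}) (a b' : A).
Hypothesis no_loop : (a, a) \notin E.
Hypothesis out_b' : forall v, (b', v) \in E -> v = a.

Lemma fork_edge_source_neq b g : fork_edge E a b g -> b != b'.
Proof.
case/and3P => Ebg Ega _; apply/eqP => eq_b.
by move: Ebg no_loop; rewrite eq_b => /out_b' eq_ga; rewrite -{1}eq_ga Ega.
Qed.

Lemma fork_edge_setD1 : fork_edge (E :\ (b', a)) a =2 fork_edge E a.
Proof.
move=> b g; apply/idP/idP.
  case/and3P; rewrite !inE => /andP [_ Ebg] /andP [_ Ega] /existsP [x].
  rewrite !inE => /andP [/andP [_ Egx] x_a].
  by rewrite /fork_edge Ebg Ega; apply/existsP; exists x; rewrite Egx.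
case/and3P => Ebg Ega /existsP [x /andP [Egx x_a]].
have g_b' : g != b' by apply/eqP => eq_g; move: x_a Egx; rewrite eq_g => /eqP x_a /out_b'.
have g_a : g != a by apply/eqP => eq_g; move: no_loop; rewrite -{1}eq_g Ega.
rewrite /fork_edge !inE Ebg Ega !xpair_eqE (negbTE g_b') (negbTE g_a) andbF /=.
by apply/existsP; exists x; rewrite !inE xpair_eqE (negbTE g_b') Egx x_a.
Qed.

End SingleOutEdge.

Lemma fork_sem_monotonic (R : realType) : monotonic_acyclic (@fork_sem R).
Proof.
move=> A Rm Rp tau _ acyc a b a_b out_b tau' _ /=.
set E := Rm :|: Rp.
have no_loop : (a, a) \notin E := acyclic_no_loop a acyc.
have out_b' v : (b, v) \in E -> v = a.
  move=> Ebv; have : (b, v) \in [set e in E | e.1 == b] by rewrite inE Ebv eqxx.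
  by rewrite out_b inE => /eqP [].
have drop_edge : sigma_S (@fork_sem R) Rm Rp tau (E :\ (b, a)) a = fork_sem Rm Rp tau a.
  rewrite /sigma_S /fork_sem -setIUl (setIidPr (subD1set _ _)).
  by rewrite (eq_fork_sign_edges _ (fork_edge_setD1 no_loop out_b')).
have rescore : (forall x, x != b -> tau' x = tau x) ->
    fork_sem Rm Rp tau' a = fork_sem Rm Rp tau a.
  move=> eq_tau; rewrite /fork_sem eq_tau // (eq_fork_sign_scores (tau := tau)) // => b0 g.
  by move/(fork_edge_source_neq no_loop out_b'); apply: eq_tau.
by rewrite drop_edge; split; [|split; [|split]] => _ // _ /rescore ->.
Qed.



Definition v0 : 'I_4 := @Ordinal 4 0 isT.
Definition v1 : 'I_4 := @Ordinal 4 1 isT.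
Definition v2 : 'I_4 := @Ordinal 4 2 isT.
Definition v3 : 'I_4 := @Ordinal 4 3 isT.

Definition ex_supports : {set 'I_4 * 'I_4} := [set (v0, v1); (v1, v2); (v1, v3); (v2, v3)].

Lemma ord4P (u : 'I_4) : [\/ u = v0, u = v1, u = v2 | u = v3].
Proof.
by case: u => [[|[|[|[|//]]]] ?]; [apply: Or41 | apply: Or42 | apply: Or43 | apply: Or44];
  apply: val_inj.
Qed.

Lemma ex_acyclic : acyclic set0 ex_supports.
Proof.
apply: (acyclic_of_rank (rk := val)) => x y; rewrite /edge_rel set0U !inE.
by case: (ord4P x) => ->; case: (ord4P y) => ->.
Qed.

Lemma ex_multifold : multifold set0 ex_supports v3 (v0, v1).
Proof.
split=> //; first by rewrite !inE.
by exists [:: v3], [:: v2; v3]; rewrite /is_path_to /edge_rel /= !inE.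
Qed.

Definition ex_v1_forks (S : {set 'I_4 * 'I_4}) : bool :=
  ((v1, v2) \in S) && ((v1, v3) \in S).

Lemma ex_fork_edge S b g :
  fork_edge (ex_supports :&: S) v3 b g =
  [&& b == v0, g == v1, (v0, v1) \in S & ex_v1_forks S].
Proof.
have no_fork_v2 : [exists x, ((v2, x) \in ex_supports :&: S) && (x != v3)] = false.
  by apply/negbTE/existsP => -[x]; case: (ord4P x) => ->; rewrite !inE /= ?andbF.
have fork_v1 : [exists x, ((v1, x) \in ex_supports :&: S) && (x != v3)] = ((v1, v2) \in S).
  apply/existsP/idP => [[x] | S12]; last by exists v2; rewrite !inE S12.
  by case: (ord4P x) => ->; rewrite !inE /= ?andbT ?andbF.
rewrite /fork_edge; case: (ord4P b) => ->; case: (ord4P g) => ->;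
  by rewrite /ex_v1_forks !inE /= ?fork_v1 ?no_fork_v2 ?andbF // (andbC ((v1, v3) \in S)).
Qed.

Lemma ex_fork_sign (R : realType) (tau : 'I_4 -> R) S :
  fork_sign (set0 :&: S :|: ex_supports :&: S) tau v3 =
  (((v0, v1) \in S) && ex_v1_forks S)%:R * sign_half (tau v0).
Proof.
have fork_exists (Q : pred 'I_4) :
    [exists b, exists g, fork_edge (ex_supports :&: S) v3 b g && Q b] =
    [&& (v0, v1) \in S, ex_v1_forks S & Q v0].
  apply/existsP/idP => [[b /existsP [g]] | /and3P [S01 forks Qv0]].
    by rewrite ex_fork_edge => /andP [/and4P [/eqP -> _ -> ->] ->].
  by exists v0; apply/existsP; exists v1; rewrite ex_fork_edge !eqxx S01 forks Qv0.
rewrite set0I set0U /fork_sign !fork_exists /sign_half.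
by case: ((v0, v1) \in S); case: (ex_v1_forks S); rewrite /= ?mul1r ?mul0r ?subrr.
Qed.

Lemma ex_RAE (R : realType) (tau : 'I_4 -> R) :
  RAE (@fork_sem R) set0 ex_supports tau v3 (v0, v1) =
  sign_half (tau v0) / 4 * shapley_mass R (set0 :|: ex_supports) (v0, v1) ex_v1_forks.
Proof.
apply: RAE_of_indicator_marginals => S /subsetP sub_S.
have S01 : (v0, v1) \notin S by apply/negP => /sub_S; rewrite !inE eqxx.
have forks_S : ex_v1_forks ((v0, v1) |: S) = ex_v1_forks S by rewrite /ex_v1_forks !inE.
rewrite /sigma_S /fork_sem !ex_fork_sign setU11 (negbTE S01) forks_S /=.
by case: (ex_v1_forks S); rewrite /= ?mul1r ?mul0r ?mulr1 ?mulr0; lra.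
Qed.

Theorem proposition12 (R : realType) :
  exists sigma : semantics R,
    sem_range sigma /\ monotonic_acyclic sigma /\
    exists (A : finType) (Rm Rp : {set A * A}) (tau : A -> R),
      qbaf_valid Rm Rp tau /\ acyclic Rm Rp /\
      exists (a : A) (r : A * A),
        multifold Rm Rp a r /\
        let phi := RAE sigma Rm Rp tau a r in
        let phi_d := fun d : R => RAE sigma Rm Rp (tau_upd tau r.1 d) a r in
        ((0 < phi /\ exists d : R, 0 <= d <= 1 /\ phi_d d < 0) \/
         (phi < 0 /\ exists d : R, 0 <= d <= 1 /\ 0 < phi_d d)).
Proof.
exists (@fork_sem R); split; first exact: fork_sem_range.
split; first exact: fork_sem_monotonic.
exists 'I_4, set0, ex_supports, (fun _ => 1); split.
  by split=> [|_]; rewrite ?set0I ?ler01 ?lexx.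
split; first exact: ex_acyclic.
exists v3, (v0, v1); split; first exact: ex_multifold.
have mass_gt0 : 0 < shapley_mass R (set0 :|: ex_supports) (v0, v1) ex_v1_forks.
  by apply: shapley_mass_gt0; rewrite /ex_v1_forks !inE.
left; rewrite /= ex_RAE sign_half1; split; first lra.
by exists 0; rewrite ex_RAE /tau_upd eqxx sign_half0 lexx ler01; split=> //; lra.
Qed.
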